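(* Let $s>0$, and let $E\subseteq2^\omega$ be a $\Sigma^1_1$ class with $\mathcal H^s(E)>0$, written as $E=\{x\in2^\omega:\exists g\in\omega^\omega\ \forall n\ R(x\restriction n,g\restriction n)\}$ for a recursive predicate $R$. Then there exists $r\in\omega^\omega$ such that for every $f\in\omega^\omega$ with $f(n)\ge r(n)$ for all $n$, the class $$C_f=\{x\in2^\omega:\exists g\in\omega^\omega\,(\forall n\ g(n)\le f(n))\ \forall n\ R(x\restriction n,g\restriction n)\}$$ is a $\Pi^0_1(f)$ subclass of $E$ with $\mathcal H^s(C_f)>0$.
   Context: Cantor space $2^\omega$ carries the metric $d(x,y)=2^{-\min\{n:x(n)\ne y(n)\}}$ for $x\ne y$; $\mathcal H^s$ denotes $s$-dimensional Hausdorff measure with respect to this metric. $\Pi^0_1(f)$ means effectively closed relative to the oracle $f$. *)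

From Stdlib Require Import Reals Lra Lia List Arith.
Open Scope R_scope.

Definition cantor := nat -> bool.
Definition baire := nat -> nat.

Definition pre {A : Type} (x : nat -> A) (n : nat) : list A :=
  map x (seq 0 n).

(** * Hausdorff measure on 2^omega with d(x,y) = 2^{-min{n : x n <> y n}} *)

Definition diam_le (U : cantor -> Prop) (t : R) : Prop :=
  forall x y, U x -> U y ->
  forall n : nat, (forall k, (k < n)%nat -> x k = y k) -> x n <> y n ->
  (/ 2) ^ n <= t.

(** [Hs_delta_ge s delta eps E] : H^s_delta(E) >= eps, i.e. every countable
    delta-cover (U_i) of E with (positive) bounds r_i >= diam U_i,
    r_i <= delta, has sum_i r_i^s >= eps (the sum possibly infinite). *)
Definition Hs_delta_ge (s delta eps : R) (E : cantor -> Prop) : Prop :=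
  forall (U : nat -> cantor -> Prop) (r : nat -> R),
    (forall i, 0 < r i <= delta) ->
    (forall i, diam_le (U i) (r i)) ->
    (forall x, E x -> exists i, U i x) ->
    forall a : R, (forall N, sum_f_R0 (fun i => Rpower (r i) s) N <= a) ->
    eps <= a.

(** H^s(E) > 0, where H^s(E) = lim_{delta->0} H^s_delta(E) = sup_delta. *)
Definition Hs_pos (s : R) (E : cantor -> Prop) : Prop :=
  exists delta eps, 0 < delta /\ 0 < eps /\ Hs_delta_ge s delta eps E.

Definition cpair (a b : nat) : nat := ((a + b) * (a + b + 1) / 2 + b)%nat.

Inductive code : Type :=
| CZero | CSucc | CPi1 | CPi2 | COrc
| CComp (c1 c2 : code)
| CPair (c1 c2 : code)
| CRec (c0 c1 : code)
| CMu (c : code).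

Inductive eval (o : nat -> nat) : code -> nat -> nat -> Prop :=
| ev_zero x : eval o CZero x 0
| ev_succ x : eval o CSucc x (S x)
| ev_p1 a b : eval o CPi1 (cpair a b) a
| ev_p2 a b : eval o CPi2 (cpair a b) b
| ev_orc x : eval o COrc x (o x)
| ev_comp c1 c2 x y z : eval o c2 x y -> eval o c1 y z -> eval o (CComp c1 c2) x z
| ev_pair c1 c2 x y z : eval o c1 x y -> eval o c2 x z -> eval o (CPair c1 c2) x (cpair y z)
| ev_rec0 c0 c1 a y : eval o c0 a y -> eval o (CRec c0 c1) (cpair a 0) y
| ev_recS c0 c1 a n y z :
    eval o (CRec c0 c1) (cpair a n) y ->
    eval o c1 (cpair a (cpair n y)) z ->
    eval o (CRec c0 c1) (cpair a (S n)) z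
| ev_mu c a n :
    eval o c (cpair a n) 0 ->
    (forall m, (m < n)%nat -> exists k, eval o c (cpair a m) (S k)) ->
    eval o (CMu c) a n.

Fixpoint code_bl (l : list bool) : nat :=
  match l with nil => 0%nat | b :: l' => S (cpair (if b then 1 else 0) (code_bl l')) end.
Fixpoint code_nl (l : list nat) : nat :=
  match l with nil => 0%nat | m :: l' => S (cpair m (code_nl l')) end.

(** R is a recursive predicate on pairs of strings (no oracle: constant 0). *)
Definition recursive_pred (Rel : list bool -> list nat -> Prop) : Prop :=
  exists e : code, forall sg tau,
    (Rel sg tau -> eval (fun _ => 0%nat) e (cpair (code_bl sg) (code_nl tau)) 0) /\
    (~ Rel sg tau -> eval (fun _ => 0%nat) e (cpair (code_bl sg) (code_nl tau)) 1).

(** C is Pi^0_1(f): its complement is the set of x having an initial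
    segment in an f-c.e. set of strings (W_e^f). *)
Definition Pi01 (f : baire) (C : cantor -> Prop) : Prop :=
  exists e : code, forall x : cantor,
    C x <-> forall n, ~ exists v, eval f e (code_bl (pre x n)) v.

Definition Sig11 (Rel : list bool -> list nat -> Prop) (x : cantor) : Prop :=
  exists g : baire, forall n, Rel (pre x n) (pre g n).

Definition Cf (Rel : list bool -> list nat -> Prop) (f : baire) (x : cantor) : Prop :=
  exists g : baire, (forall n, (g n <= f n)%nat) /\ forall n, Rel (pre x n) (pre g n).

(* Net measure at level [m] (covers by cylinders of length at least [m], a cylinder of
   length [l] weighing [2^(-s l)]) is comparable to [H^s_delta] for [delta = 2^-m], so [E]
   has positive net measure [eps] at some level.  Let [E_tau] be the set of points with a
   witness bounded by [tau] on its length.  As [j] grows, [E_(tau ++ [j])] increases to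
   [E_tau], and net measure is continuous along increasing unions (replace nearly optimal
   covers of the approximants by their outermost cylinders); so [r] can be chosen entry by
   entry, losing [eps 2^-(n+2)] at step [n].  Every cylinder cover of [C_r] already covers
   some [E_(r|n)] by compactness of the [r]-bounded witnesses, hence [C_r], and every
   [C_f] containing it, has net measure at least [eps/2].  Finally [x] is in [C_f] iff
   every prefix of [x] has an [f]-bounded witness string, which an [f]-oracle finds by a
   bounded search; this makes [C_f] a [Pi^0_1(f)] class. *)

From Stdlib Require Import Reals Lra Lia List Arith Bool ClassicalEpsilon Classical.
Import ListNotations.
Open Scope nat_scope.

Fixpoint tri (n : nat) : nat := match n with 0 => 0 | S n' => tri n' + n end.

Lemma cpair_tri a b : cpair a b = tri (a + b) + b.
Proof.
  unfold cpair. f_equal. generalize (a + b) as n. induction n as [|n IH]; [reflexivity|].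
  replace (S n * (S n + 1)) with (n * (n + 1) + S n * 2) by lia.
  rewrite Nat.div_add by lia. simpl tri. lia.
Qed.

Lemma tri_mono m n : m <= n -> tri m <= tri n.
Proof. induction 1; simpl; lia. Qed.

Lemma tri_ge n : n <= tri n.
Proof. induction n; simpl; lia. Qed.

Lemma cpair_inj a b a' b' : cpair a b = cpair a' b' -> a = a' /\ b = b'.
Proof.
  rewrite !cpair_tri. intros H.
  destruct (lt_eq_lt_dec (a + b) (a' + b')) as [[Hl|He]|Hl].
  - pose proof (tri_mono _ _ Hl). simpl in *. lia.
  - rewrite He in H. lia.
  - pose proof (tri_mono _ _ Hl). simpl in *. lia.
Qed.

Lemma cpair_surj x : exists a b, cpair a b = x.
Proof.
  induction x as [|x [[|a] [b IH]]].
  - exists 0, 0. reflexivity.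
  - exists (S b), 0. rewrite !cpair_tri in *. simpl in *. rewrite !Nat.add_0_r in *. lia.
  - exists a, (S b). rewrite !cpair_tri in *. replace (a + S b) with (S a + b) by lia. lia.
Qed.

Lemma cpair_ge_l a b : a <= cpair a b.
Proof. rewrite cpair_tri. pose proof (tri_ge (a + b)). lia. Qed.

Lemma cpair_ge_r a b : b <= cpair a b.
Proof. rewrite cpair_tri. lia. Qed.

Lemma cpair_mono a b a' b' : a <= a' -> b <= b' -> cpair a b <= cpair a' b'.
Proof. intros. rewrite !cpair_tri. pose proof (tri_mono (a + b) (a' + b')). lia. Qed.

Definition cfst (x : nat) : nat :=
  proj1_sig (constructive_indefinite_description _ (cpair_surj x)).
Definition csnd (x : nat) : nat :=
  proj1_sig (constructive_indefinite_description _
    (proj2_sig (constructive_indefinite_description _ (cpair_surj x)))).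

Lemma cpair_cfst_csnd x : cpair (cfst x) (csnd x) = x.
Proof.
  unfold cfst, csnd.
  destruct (constructive_indefinite_description _ (cpair_surj x)) as [a Ha]; simpl.
  destruct (constructive_indefinite_description _ Ha) as [b Hb]; exact Hb.
Qed.

Lemma cfst_cpair a b : cfst (cpair a b) = a.
Proof. exact (proj1 (cpair_inj _ _ _ _ (cpair_cfst_csnd (cpair a b)))). Qed.

Lemma csnd_cpair a b : csnd (cpair a b) = b.
Proof. exact (proj2 (cpair_inj _ _ _ _ (cpair_cfst_csnd (cpair a b)))). Qed.

Definition computable (o : nat -> nat) (F : nat -> nat) : Prop :=
  exists c, forall x, eval o c x (F x).

Lemma computable_ext o F G : (forall x, F x = G x) -> computable o G -> computable o F.
Proof. intros H [c Hc]. exists c. intros x. rewrite H. apply Hc. Qed.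

Lemma eval_cfst o x : eval o CPi1 x (cfst x).
Proof. rewrite <- (cpair_cfst_csnd x) at 1. constructor. Qed.

Lemma eval_csnd o x : eval o CPi2 x (csnd x).
Proof. rewrite <- (cpair_cfst_csnd x) at 1. constructor. Qed.

Lemma computable_id o : computable o (fun x => x).
Proof.
  exists (CPair CPi1 CPi2). intros x. rewrite <- (cpair_cfst_csnd x) at 2.
  constructor; [apply eval_cfst | apply eval_csnd].
Qed.

Lemma computable_const o k : computable o (fun _ => k).
Proof.
  induction k as [|k [c Hc]].
  - exists CZero. constructor.
  - exists (CComp CSucc c). intros x. econstructor; [apply Hc | constructor].
Qed.

Lemma computable_S o F : computable o F -> computable o (fun x => S (F x)).
Proof. intros [c H]. exists (CComp CSucc c). intros x. econstructor; eauto. constructor. Qed.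

Lemma computable_cfst o F : computable o F -> computable o (fun x => cfst (F x)).
Proof. intros [c H]. exists (CComp CPi1 c). intros x. econstructor; eauto. apply eval_cfst. Qed.

Lemma computable_csnd o F : computable o F -> computable o (fun x => csnd (F x)).
Proof. intros [c H]. exists (CComp CPi2 c). intros x. econstructor; eauto. apply eval_csnd. Qed.

Lemma computable_oracle o F : computable o F -> computable o (fun x => o (F x)).
Proof. intros [c H]. exists (CComp COrc c). intros x. econstructor; eauto. constructor. Qed.

Lemma computable_cpair o F G :
  computable o F -> computable o G -> computable o (fun x => cpair (F x) (G x)).
Proof. intros [c1 H1] [c2 H2]. exists (CPair c1 c2). intros x. constructor; auto. Qed.

Lemma computable_compose o F G :
  computable o F -> computable o G -> computable o (fun x => F (G x)).
Proof. intros [c1 H1] [c2 H2]. exists (CComp c1 c2). intros x. econstructor; eauto. Qed.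

Fixpoint prec (h0 : nat -> nat) (h1 : nat -> nat -> nat -> nat) (a n : nat) : nat :=
  match n with 0 => h0 a | S n => h1 a n (prec h0 h1 a n) end.

Lemma computable_prec o h0 h1 A N :
  computable o h0 -> computable o (fun z => h1 (cfst z) (cfst (csnd z)) (csnd (csnd z))) ->
  computable o A -> computable o N -> computable o (fun x => prec h0 h1 (A x) (N x)).
Proof.
  intros [c0 H0] [c1 H1] HA HN.
  assert (Hr : computable o (fun x => prec h0 h1 (cfst x) (csnd x))).
  { exists (CRec c0 c1). intros x. rewrite <- (cpair_cfst_csnd x) at 1.
    generalize (cfst x) (csnd x). intros a n. induction n as [|n IH].
    - constructor. apply H0.
    - eapply ev_recS; [apply IH|].
      pose proof (H1 (cpair a (cpair n (prec h0 h1 a n)))) as E.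
      rewrite !cfst_cpair, !csnd_cpair, !cfst_cpair in E. exact E. }
  eapply computable_ext; [|exact (computable_compose o _ _ Hr (computable_cpair o A N HA HN))].
  intros x. cbv beta. rewrite cfst_cpair, csnd_cpair. reflexivity.
Qed.

Ltac computable_prim_step :=
  cbv beta; first
  [ assumption
  | simple apply computable_id | simple apply computable_const
  | simple apply computable_S | simple apply computable_cfst | simple apply computable_csnd
  | simple apply computable_oracle | simple apply computable_cpair | simple apply computable_prec ].

Definition ifz (z a b : nat) : nat := match z with 0 => a | S _ => b end.

Lemma computable_ifz o Z A B : computable o Z -> computable o A -> computable o B ->
  computable o (fun x => ifz (Z x) (A x) (B x)).
Proof.
  intros HZ HA HB.
  apply computable_ext with
    (fun x => prec (fun a => cfst a) (fun a _ _ => csnd a) (cpair (A x) (B x)) (Z x)).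
  { intros x. destruct (Z x); simpl; rewrite ?cfst_cpair, ?csnd_cpair; reflexivity. }
  repeat computable_prim_step.
Qed.

Lemma computable_pred o F : computable o F -> computable o (fun x => pred (F x)).
Proof.
  intros HF. apply computable_ext with (fun x => prec (fun _ => 0) (fun _ n _ => n) 0 (F x)).
  { intros x. destruct (F x); reflexivity. }
  repeat computable_prim_step.
Qed.

Lemma computable_add o F G : computable o F -> computable o G -> computable o (fun x => F x + G x).
Proof.
  intros HF HG. apply computable_ext with (fun x => prec (fun a => a) (fun _ _ y => S y) (F x) (G x)).
  { intros x. generalize (G x). induction n; simpl; lia. }
  repeat computable_prim_step.
Qed.

Lemma computable_sub o F G : computable o F -> computable o G -> computable o (fun x => F x - G x).
Proof.
  intros HF HG.
  apply computable_ext with (fun x => prec (fun a => a) (fun _ _ y => pred y) (F x) (G x)).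
  { intros x. generalize (G x). induction n; simpl; lia. }
  repeat (first [computable_prim_step | simple apply computable_pred]).
Qed.

Ltac computable_step :=
  first
  [ computable_prim_step
  | simple apply computable_ifz | simple apply computable_pred
  | simple apply computable_add | simple apply computable_sub ].

Ltac solve_computable := repeat computable_step.

Ltac inv_cpair := repeat match goal with
  | H : cpair _ _ = cpair _ _ |- _ => apply cpair_inj in H; destruct H; subst
  end.

Lemma eval_functional o c x y y' : eval o c x y -> eval o c x y' -> y = y'.
Proof.
  revert x y y'. induction c; intros x y y' H1 H2.
  1-5: inversion H1; inversion H2; subst; inv_cpair; auto.
  - inversion H1; subst. inversion H2; subst.
    assert (y0 = y1) by eauto. subst. eauto.
  - inversion H1; subst. inversion H2; subst. f_equal; eauto.
  - revert y' H2. remember (CRec c1 c2) as cc.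
    induction H1; try discriminate; inversion Heqcc; subst; intros y' H2.
    + inversion H2; subst; inv_cpair; try discriminate. eauto.
    + inversion H2; subst; inv_cpair; try discriminate.
      match goal with Hn : S _ = S _ |- _ => injection Hn as -> end.
      match goal with Hy : eval _ (CRec _ _) _ ?y1 |- _ =>
        assert (y = y1) by (apply IHeval1; auto) end.
      subst. eauto.
  - inversion H1; subst. inversion H2; subst.
    destruct (lt_eq_lt_dec y y') as [[Hl|He]|Hl]; auto; exfalso.
    + match goal with Hf : forall m, m < y' -> _ |- _ => destruct (Hf y Hl) as [k Hk] end.
      match goal with H0 : eval o c (cpair x y) 0 |- _ => specialize (IHc _ _ _ H0 Hk) end.
      discriminate.
    + match goal with Hf : forall m, m < y -> _ |- _ => destruct (Hf y' Hl) as [k Hk] end.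
      match goal with H0 : eval o c (cpair x y') 0 |- _ => specialize (IHc _ _ _ H0 Hk) end.
      discriminate.
Qed.

Fixpoint erase_oracle (c : code) : code :=
  match c with
  | COrc => CZero
  | CComp a b => CComp (erase_oracle a) (erase_oracle b)
  | CPair a b => CPair (erase_oracle a) (erase_oracle b)
  | CRec a b => CRec (erase_oracle a) (erase_oracle b)
  | CMu a => CMu (erase_oracle a)
  | c => c
  end.

Lemma eval_erase_oracle o c x y :
  eval (fun _ => 0) c x y -> eval o (erase_oracle c) x y.
Proof.
  revert x y. induction c; intros x y H; simpl.
  1-5: inversion H; subst; constructor.
  1-2: inversion H; subst; econstructor; eauto.
  - remember (CRec c1 c2) as cc.
    induction H; try discriminate; inversion Heqcc; subst; econstructor; eauto.
  - inversion H; subst. constructor; auto.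
    intros m Hm. match goal with Hf : forall m, m < _ -> _ |- _ => destruct (Hf m Hm) as [k Hk] end.
    eauto.
Qed.

Definition b2n (b : bool) : nat := if b then 1 else 0.

Lemma code_bl_nl l : code_bl l = code_nl (map b2n l).
Proof. induction l; simpl; auto. Qed.

Lemma code_nl_length l : length l <= code_nl l.
Proof. induction l; simpl; auto. pose proof (cpair_ge_r a (code_nl l)). lia. Qed.

Lemma code_nl_surj n : exists l, code_nl l = n.
Proof.
  induction n as [[|n] IH] using lt_wf_ind; [now exists []|].
  destruct (cpair_surj n) as [a [b <-]].
  destruct (IH b) as [l <-]; [pose proof (cpair_ge_r a b); lia|].
  now exists (a :: l).
Qed.

Lemma code_nl_inj l l' : code_nl l = code_nl l' -> l = l'.
Proof.
  revert l'; induction l; destruct l'; simpl; intros H; try discriminate; auto.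
  injection H as H. apply cpair_inj in H as [-> ?]. f_equal. auto.
Qed.

Lemma code_bl_inj l l' : code_bl l = code_bl l' -> l = l'.
Proof.
  rewrite !code_bl_nl. intros H. apply code_nl_inj in H.
  revert l' H; induction l as [|a l IH]; intros [|b l'] H; try discriminate; auto.
  injection H as Hab Hl. f_equal; auto. destruct a, b; easy.
Qed.

Definition ctl X := ifz X 0 (csnd (pred X)).
Definition chd X := cfst (pred X).
Definition cskip k X := prec (fun a => a) (fun _ _ y => ctl y) X k.
Definition clength X := prec (fun _ => 0) (fun a n y => y + ifz (cskip n a) 0 1) X X.
Definition cnth k X := chd (cskip k X).
Definition crevtake k X := prec (fun _ => 0) (fun a n y => S (cpair (cnth n a) y)) X k.
Definition crevtakeb k X := prec (fun _ => 0) (fun a n y => S (cpair (ifz (cnth n a) 0 1) y)) X k.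
Definition crev Y := csnd (prec (fun a => cpair a 0)
  (fun _ _ p => cpair (ctl (cfst p)) (S (cpair (chd (cfst p)) (csnd p)))) Y (clength Y)).
Definition ctake k X := crev (crevtake k X).
Definition ctakeb k X := crev (crevtakeb k X).

Lemma computable_ctake o F G :
  computable o F -> computable o G -> computable o (fun x => ctake (F x) (G x)).
Proof. intros. unfold ctake, crev, crevtake, clength, cnth, cskip, chd, ctl. solve_computable. Qed.

Lemma computable_ctakeb o F G :
  computable o F -> computable o G -> computable o (fun x => ctakeb (F x) (G x)).
Proof. intros. unfold ctakeb, crev, crevtakeb, clength, cnth, cskip, chd, ctl. solve_computable. Qed.

Lemma tl_skipn {A} k (l : list A) : tl (skipn k l) = skipn (S k) l.
Proof. revert l; induction k; intros [|a l]; simpl; auto. Qed.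

Lemma skipn_nth k (l : list nat) : k < length l -> skipn k l = nth k l 0 :: skipn (S k) l.
Proof. revert l; induction k; intros [|a l] H; simpl in *; try lia; auto. apply IHk. lia. Qed.

Lemma firstn_S_nth {A} (d : A) k (l : list A) :
  k < length l -> firstn (S k) l = firstn k l ++ [nth k l d].
Proof.
  revert l; induction k; intros [|a l] H; simpl in *; try lia; auto.
  rewrite IHk by lia. reflexivity.
Qed.

Lemma ctl_code l : ctl (code_nl l) = code_nl (tl l).
Proof. destruct l; simpl; auto. unfold ctl. simpl. apply csnd_cpair. Qed.

Lemma chd_code l : chd (code_nl l) = nth 0 l 0.
Proof.
  unfold chd. destruct l; simpl; [|apply cfst_cpair].
  change 0 with (cpair 0 0) at 1. apply cfst_cpair.
Qed.

Lemma cskip_code k l : cskip k (code_nl l) = code_nl (skipn k l).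
Proof.
  induction k; simpl; auto. unfold cskip in *. simpl. rewrite IHk, ctl_code, tl_skipn. reflexivity.
Qed.

Lemma clength_code l : clength (code_nl l) = length l.
Proof.
  unfold clength.
  assert (H : forall N, prec (fun _ => 0) (fun a n y => y + ifz (cskip n a) 0 1) (code_nl l) N
                        = min N (length l)).
  { induction N; [reflexivity|]. cbn [prec]. rewrite IHN, cskip_code.
    destruct (code_nl (skipn N l)) eqn:E; cbn [ifz].
    - apply code_nl_inj with (l' := []), skipn_all_iff in E. lia.
    - assert (skipn N l <> []) by (intros Hc; rewrite Hc in E; discriminate).
      rewrite <- skipn_all_iff in H. lia. }
  rewrite H. pose proof (code_nl_length l). lia.
Qed.

Lemma clength_code_bl sg : clength (code_bl sg) = length sg.
Proof. rewrite code_bl_nl, clength_code, length_map. reflexivity. Qed.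

Lemma cnth_code k l : cnth k (code_nl l) = nth k l 0.
Proof.
  unfold cnth. rewrite cskip_code, chd_code. destruct (Nat.lt_ge_cases k (length l)).
  - rewrite skipn_nth by auto. reflexivity.
  - rewrite skipn_all2, !nth_overflow by (simpl; lia). reflexivity.
Qed.

Lemma crevtake_code k l : k <= length l -> crevtake k (code_nl l) = code_nl (rev (firstn k l)).
Proof.
  induction k; intros H; [reflexivity|].
  unfold crevtake in *; cbn [prec]. rewrite IHk, (firstn_S_nth 0) by lia.
  rewrite rev_app_distr, cnth_code. reflexivity.
Qed.

Lemma crevtakeb_code k l :
  k <= length l -> crevtakeb k (code_bl l) = code_bl (rev (firstn k l)).
Proof.
  rewrite !code_bl_nl. induction k; intros H; [reflexivity|].
  unfold crevtakeb in *; cbn [prec]. rewrite IHk by lia.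
  rewrite cnth_code. change 0 with (b2n false). rewrite map_nth.
  rewrite (firstn_S_nth false) by lia. rewrite rev_app_distr.
  destruct (nth k l false); reflexivity.
Qed.

Lemma crev_code l : crev (code_nl l) = code_nl (rev l).
Proof.
  unfold crev. rewrite clength_code.
  assert (H : forall j, j <= length l -> prec (fun a => cpair a 0)
      (fun _ _ p => cpair (ctl (cfst p)) (S (cpair (chd (cfst p)) (csnd p)))) (code_nl l) j
      = cpair (code_nl (skipn j l)) (code_nl (rev (firstn j l)))).
  { induction j; intros Hj; [reflexivity|]. cbn [prec].
    rewrite IHj by lia. rewrite cfst_cpair, csnd_cpair, ctl_code, chd_code.
    rewrite (skipn_nth j l), (firstn_S_nth 0) by lia. rewrite rev_app_distr. reflexivity. }
  rewrite H, csnd_cpair, firstn_all by lia. reflexivity.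
Qed.

Lemma ctake_code k l : k <= length l -> ctake k (code_nl l) = code_nl (firstn k l).
Proof. intros. unfold ctake. rewrite crevtake_code, crev_code, rev_involutive by auto. reflexivity. Qed.

Lemma ctakeb_code k l : k <= length l -> ctakeb k (code_bl l) = code_bl (firstn k l).
Proof.
  intros. unfold ctakeb. rewrite crevtakeb_code by auto.
  rewrite !code_bl_nl, crev_code, <- map_rev, rev_involutive. reflexivity.
Qed.

Lemma ctakeb_is_code k X : exists sg, ctakeb k X = code_bl sg.
Proof.
  assert (H : exists sg, crevtakeb k X = code_bl sg).
  { induction k as [|k [sg Hsg]]; [now exists []|].
    unfold crevtakeb in *. cbn [prec]. rewrite Hsg.
    exists (match cnth k X with 0 => false | _ => true end :: sg).
    destruct (cnth k X); reflexivity. }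
  destruct H as [sg H]. exists (rev sg). unfold ctakeb.
  rewrite H, !code_bl_nl, crev_code, map_rev. reflexivity.
Qed.

Definition csum (g : nat -> nat -> nat) (X N : nat) : nat :=
  prec (fun _ => 0) (fun a c y => y + g a c) X N.

Lemma csum_eq0 g X N : csum g X N = 0 <-> forall c, c < N -> g X c = 0.
Proof.
  unfold csum. induction N; cbn [prec]; split; intros H.
  - intros; lia.
  - reflexivity.
  - intros c Hc. apply Nat.eq_add_0 in H as [H1 H2].
    destruct (Nat.eq_dec c N); [subst; auto|]. apply IHN; auto. lia.
  - rewrite (proj2 IHN) by (intros; apply H; lia). rewrite H by lia. reflexivity.
Qed.

Lemma csum_ge g X N c : c < N -> g X c <= csum g X N.
Proof.
  unfold csum. induction N; intros H; cbn [prec]; [lia|].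
  destruct (Nat.eq_dec c N); [subst; lia|]. specialize (IHN ltac:(lia)). lia.
Qed.

Definition rel_test (Rel : list bool -> list nat -> Prop) (w : nat) : nat :=
  if excluded_middle_informative
       (exists sg tau, w = cpair (code_bl sg) (code_nl tau) /\ Rel sg tau)
  then 0 else 1.

Lemma rel_test_code Rel sg tau : rel_test Rel (cpair (code_bl sg) (code_nl tau)) = 0 <-> Rel sg tau.
Proof.
  unfold rel_test. destruct (excluded_middle_informative _) as [[sg' [tau' [E HR]]]|Hn].
  - apply cpair_inj in E as [E1 E2].
    apply code_bl_inj in E1. apply code_nl_inj in E2. subst. tauto.
  - split; intros H; [discriminate|]. exfalso. eauto.
Qed.

Lemma computable_rel_test o Rel G : recursive_pred Rel -> computable o G ->
  (forall x, exists sg tau, G x = cpair (code_bl sg) (code_nl tau)) ->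
  computable o (fun x => rel_test Rel (G x)).
Proof.
  intros [e He] [c Hc] HG. exists (CComp (erase_oracle e) c). intros x.
  destruct (HG x) as [sg [tau Hx]].
  econstructor; [apply Hc|]. apply eval_erase_oracle. rewrite Hx.
  destruct (classic (Rel sg tau)) as [HR|HR].
  - rewrite (proj2 (rel_test_code Rel sg tau) HR). apply He, HR.
  - replace (rel_test Rel _) with 1; [apply He, HR|].
    unfold rel_test. destruct (excluded_middle_informative _) as [[sg' [tau' [E HR']]]|]; auto.
    apply cpair_inj in E as [E1 E2].
    apply code_bl_inj in E1. apply code_nl_inj in E2. subst. tauto.
Qed.

Lemma computable_rel_test_prefixes o Rel A B K L : recursive_pred Rel ->
  computable o A -> computable o B -> computable o K -> computable o L ->
  computable o (fun x => rel_test Rel (cpair (ctakeb (A x) (B x)) (ctake (K x) (L x)))).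
Proof.
  intros HR HA HB HK HL. apply computable_rel_test; [auto| |].
  - apply computable_cpair; [apply computable_ctakeb | apply computable_ctake]; auto.
  - intros x. destruct (ctakeb_is_code (A x) (B x)) as [sg Hsg].
    destruct (code_nl_surj (ctake (K x) (L x))) as [tau Htau].
    exists sg, tau. rewrite Hsg, Htau. reflexivity.
Qed.

Definition witness_string Rel (f : nat -> nat) (sg : list bool) (tau : list nat) : Prop :=
  length tau = length sg /\ (forall i, i < length sg -> nth i tau 0 <= f i) /\
  (forall k, k <= length sg -> Rel (firstn k sg) (firstn k tau)).

(* On input [X = code_bl sg], [entry_bound] bounds every [f i] with [i < length sg] and
   [candidate_bound] bounds the code of every candidate witness string. *)
Definition entry_bound (f : nat -> nat) X := csum (fun _ i => f i) X (clength X).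
Definition candidate_bound f X :=
  prec (fun _ => 0) (fun a _ y => S (cpair (entry_bound f a) y)) X (clength X).

Definition witness_defect Rel f X c :=
  (clength c - clength X) + (clength X - clength c)
  + csum (fun a i => cnth i (csnd a) - f i) (cpair X c) (clength X)
  + csum (fun a k => rel_test Rel (cpair (ctakeb k (cfst a)) (ctake k (csnd a))))
      (cpair X c) (S (clength X)).

Definition count_witnesses Rel f X :=
  csum (fun a c => ifz (witness_defect Rel f a c) 1 0) X (S (candidate_bound f X)).

Lemma computable_count_witnesses Rel f :
  recursive_pred Rel -> computable f (fun w => count_witnesses Rel f (cfst w)).
Proof.
  intros HR. unfold count_witnesses, witness_defect, candidate_bound, entry_bound,
    csum, clength, cnth, cskip, chd, ctl.
  repeat (first [computable_step | simple apply computable_rel_test_prefixes]).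
Qed.

Lemma witness_defect_eq0 Rel f sg tau :
  witness_defect Rel f (code_bl sg) (code_nl tau) = 0 <-> witness_string Rel f sg tau.
Proof.
  unfold witness_defect, witness_string.
  rewrite clength_code_bl, clength_code, !Nat.eq_add_0, !csum_eq0, cfst_cpair, csnd_cpair.
  split.
  - intros [[[H1 H1'] H2] H3]. split; [lia|split].
    + intros i Hi. specialize (H2 i Hi). rewrite cnth_code in H2. lia.
    + intros k Hk. specialize (H3 k ltac:(lia)).
      rewrite ctakeb_code, ctake_code in H3 by lia. apply rel_test_code in H3. exact H3.
  - intros [HL [H2 H3]]. split; [split; [lia|]|].
    + intros i Hi. rewrite cnth_code. specialize (H2 i Hi). lia.
    + intros k Hk. rewrite ctakeb_code, ctake_code by lia. apply rel_test_code, H3. lia.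
Qed.

Lemma code_nl_le_candidate_bound f X tau : length tau <= clength X ->
  (forall a, In a tau -> a <= entry_bound f X) -> code_nl tau <= candidate_bound f X.
Proof.
  unfold candidate_bound. generalize (clength X) as N. intros N.
  revert N; induction tau as [|a tau IH]; intros [|N] HN Ha; cbn [code_nl prec]; simpl in HN; try lia.
  apply le_n_S, cpair_mono; [apply Ha; left; auto|].
  apply IH; [lia|]. intros b Hb. apply Ha. right. auto.
Qed.

Lemma count_witnesses_eq0 Rel f sg :
  count_witnesses Rel f (code_bl sg) = 0 <-> ~ exists tau, witness_string Rel f sg tau.
Proof.
  unfold count_witnesses. rewrite csum_eq0. split.
  - intros H [tau Hw].
    assert (Hc : code_nl tau <= candidate_bound f (code_bl sg)).
    { destruct Hw as [HL [Hf _]]. apply code_nl_le_candidate_bound; [rewrite clength_code_bl; lia|].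
      intros a Ha. apply In_nth with (d := 0) in Ha as [i [Hi <-]].
      eapply Nat.le_trans; [apply Hf; lia|]. unfold entry_bound. rewrite clength_code_bl.
      apply (csum_ge (fun _ i => f i)). lia. }
    specialize (H (code_nl tau) ltac:(lia)).
    rewrite (proj2 (witness_defect_eq0 _ _ _ _) Hw) in H. discriminate.
  - intros Hn c _. destruct (code_nl_surj c) as [tau <-].
    destruct (witness_defect _ _ _ _) eqn:E; [|reflexivity].
    exfalso. apply Hn. exists tau. apply witness_defect_eq0, E.
Qed.

(* The code searches for the least [n] with [count_witnesses = 0], so it converges on
   [code_bl (pre x n)] exactly when [pre x n] has no bounded witness string. *)
Lemma Pi01_witness_strings Rel f : recursive_pred Rel ->
  Pi01 f (fun x => forall n, exists tau, witness_string Rel f (pre x n) tau).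
Proof.
  intros HR. destruct (computable_count_witnesses Rel f HR) as [cc Hcc].
  exists (CMu cc). intros x. split.
  - intros H n [v Hv]. inversion Hv; subst.
    match goal with H0 : eval _ cc _ 0 |- _ =>
      pose proof (eval_functional _ _ _ _ _ H0 (Hcc _)) as E end.
    rewrite cfst_cpair in E. symmetry in E. apply count_witnesses_eq0 in E. apply E, H.
  - intros H n. apply NNPP. intros Hn. apply (H n). exists 0. constructor.
    + pose proof (Hcc (cpair (code_bl (pre x n)) 0)) as E. rewrite cfst_cpair in E.
      rewrite (proj2 (count_witnesses_eq0 _ _ _) Hn) in E. exact E.
    + intros m Hm. lia.
Qed.

Lemma length_pre {A} (x : nat -> A) n : length (pre x n) = n.
Proof. unfold pre. rewrite length_map, length_seq. reflexivity. Qed.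

Lemma pre_S {A} (x : nat -> A) n : pre x (S n) = pre x n ++ [x n].
Proof. unfold pre. rewrite seq_S, map_app. reflexivity. Qed.

Lemma nth_pre {A} (x : nat -> A) n i d : i < n -> nth i (pre x n) d = x i.
Proof.
  intros H. unfold pre. rewrite nth_indep with (d' := x 0) by (rewrite length_map, length_seq; lia).
  rewrite map_nth, seq_nth by lia. reflexivity.
Qed.

Lemma pre_ext {A} (x y : nat -> A) n : (forall i, i < n -> x i = y i) -> pre x n = pre y n.
Proof. intros H. unfold pre. apply map_ext_in. intros a Ha. apply in_seq in Ha. apply H. lia. Qed.

Lemma pre_inj {A} (x y : nat -> A) n : pre x n = pre y n -> forall i, i < n -> x i = y i.
Proof.
  intros H i Hi. rewrite <- (nth_pre x n i (x 0) Hi), <- (nth_pre y n i (x 0) Hi), H. reflexivity.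
Qed.

Lemma firstn_pre {A} (x : nat -> A) n k : k <= n -> firstn k (pre x n) = pre x k.
Proof.
  intros H. apply nth_ext with (d := x 0) (d' := x 0).
  - rewrite length_firstn, !length_pre. lia.
  - intros i Hi. rewrite length_firstn, length_pre in Hi.
    rewrite nth_firstn, !nth_pre by lia. destruct (Nat.ltb_spec i k); [reflexivity|lia].
Qed.

Lemma pre_nth (tau : list nat) k : k <= length tau -> pre (fun i => nth i tau 0) k = firstn k tau.
Proof.
  intros H. apply nth_ext with (d := 0) (d' := 0).
  - rewrite length_firstn, !length_pre. lia.
  - intros i Hi. rewrite length_pre in Hi. rewrite nth_pre, nth_firstn by lia.
    destruct (Nat.ltb_spec i k); [reflexivity|lia].
Qed.

Lemma pre_diagonal (t : nat -> list nat) :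
  (forall k, length (t k) = k) -> (forall k k', k <= k' -> firstn k (t k') = t k) ->
  forall p, pre (fun i => nth i (t (S i)) 0) p = t p.
Proof.
  intros Hlen Hpre p. apply nth_ext with (d := 0) (d' := 0).
  - rewrite length_pre, Hlen. reflexivity.
  - intros i Hi. rewrite length_pre in Hi. rewrite nth_pre by auto.
    rewrite <- (Hpre (S i) p) by lia. rewrite nth_firstn.
    destruct (Nat.ltb_spec i (S i)); [reflexivity|lia].
Qed.

Lemma eventually_all_le (P : nat -> nat -> Prop) K :
  (forall v N N', N <= N' -> P v N -> P v N') ->
  (forall v, v <= K -> exists N, P v N) -> exists N, forall v, v <= K -> P v N.
Proof.
  intros Hm H. induction K as [|K IH].
  - destruct (H 0 (le_n 0)) as [N HN]. exists N. intros v Hv. replace v with 0 by lia. auto.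
  - destruct IH as [N1 H1]; [intros; apply H; lia|].
    destruct (H (S K) (le_n _)) as [N2 H2]. exists (N1 + N2). intros v Hv.
    destruct (Nat.eq_dec v (S K)) as [->|]; [apply Hm with N2; auto; lia|].
    apply Hm with N1; [lia|]. apply H1. lia.
Qed.

Definition frequent (z : nat -> nat -> nat) (l : list nat) : Prop :=
  forall N, exists n, N <= n /\ pre (z n) (length l) = l.

Lemma frequent_extend z B l : (forall n i, z n i <= B i) -> frequent z l ->
  exists v, v <= B (length l) /\ frequent z (l ++ [v]).
Proof.
  intros HB Hl. apply NNPP. intros Hn.
  assert (H : forall v, v <= B (length l) ->
            exists N, forall n, N <= n -> pre (z n) (length (l ++ [v])) <> l ++ [v]).
  { intros v Hv. apply NNPP. intros Hc. apply Hn. exists v. split; auto.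
    intros N. apply NNPP. intros Hc2. apply Hc. exists N. intros n Hn' E. apply Hc2. eauto. }
  destruct (eventually_all_le
    (fun v N => forall n, N <= n -> pre (z n) (length (l ++ [v])) <> l ++ [v]) _
    ltac:(intros v N N' HN HP n Hn'; apply HP; lia) H) as [N HN].
  destruct (Hl N) as [n [Hn1 Hn2]].
  apply (HN (z n (length l)) (HB _ _) n Hn1).
  rewrite length_app, Nat.add_1_r, pre_S, Hn2. reflexivity.
Qed.

Definition frequent_choice (z : nat -> nat -> nat) (B : nat -> nat) (l : list nat) : nat :=
  match excluded_middle_informative (exists v, v <= B (length l) /\ frequent z (l ++ [v])) with
  | left H => proj1_sig (constructive_indefinite_description _ H)
  | right _ => 0
  end.

Fixpoint frequent_branch z B k : list nat :=
  match k with
  | 0 => []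
  | S k => frequent_branch z B k ++ [frequent_choice z B (frequent_branch z B k)]
  end.

Lemma length_frequent_branch z B k : length (frequent_branch z B k) = k.
Proof. induction k; simpl; auto. rewrite length_app, IHk. simpl. lia. Qed.

Lemma frequent_branch_spec z B k : (forall n i, z n i <= B i) ->
  frequent z (frequent_branch z B k) /\ forall i, i < k -> nth i (frequent_branch z B k) 0 <= B i.
Proof.
  intros HB. induction k as [|k [H1 H2]].
  - split; [|intros; lia]. intros N. exists N. auto.
  - simpl. unfold frequent_choice. destruct (excluded_middle_informative _) as [He|Hn].
    + destruct (constructive_indefinite_description _ He) as [v [Hv1 Hv2]]. simpl. split; auto.
      intros i Hi. destruct (Nat.eq_dec i k) as [->|].
      * rewrite app_nth2, length_frequent_branch, Nat.sub_diag by (rewrite length_frequent_branch; lia).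
        rewrite length_frequent_branch in Hv1. exact Hv1.
      * rewrite app_nth1 by (rewrite length_frequent_branch; lia). apply H2. lia.
    + exfalso. apply Hn, frequent_extend; auto.
Qed.

Lemma firstn_frequent_branch z B k k' :
  k <= k' -> firstn k (frequent_branch z B k') = frequent_branch z B k.
Proof.
  induction 1.
  - rewrite <- (length_frequent_branch z B k) at 1. apply firstn_all.
  - simpl. rewrite firstn_app, IHle, length_frequent_branch.
    replace (k - m) with 0 by lia. apply app_nil_r.
Qed.

(* König's lemma for the finitely branching tree of sequences bounded by [B]. *)
Lemma bounded_cluster_point (z : nat -> nat -> nat) (B : nat -> nat) :
  (forall n i, z n i <= B i) ->
  exists y, (forall i, y i <= B i) /\ forall p N, exists n, N <= n /\ pre (z n) p = pre y p.
Proof.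
  intros HB. exists (fun i => nth i (frequent_branch z B (S i)) 0).
  pose proof (pre_diagonal _ (length_frequent_branch z B) (firstn_frequent_branch z B)) as Hy.
  split.
  - intros i. apply (proj2 (frequent_branch_spec z B (S i) HB)). lia.
  - intros p N. destruct (proj1 (frequent_branch_spec z B p HB) N) as [n [Hn1 Hn2]].
    exists n. split; auto. rewrite Hy. rewrite length_frequent_branch in Hn2. auto.
Qed.

(* Apply König's lemma to [x] and [g] interleaved into one sequence, bounded by [1] at even
   and by [B] at odd places. *)
Lemma bounded_witness_limit (Rel : list bool -> list nat -> Prop) (B : nat -> nat)
    (xs : nat -> cantor) (gs : nat -> baire) :
  (forall n i, i < n -> gs n i <= B i) ->
  (forall n k, k <= n -> Rel (pre (xs n) k) (pre (gs n) k)) ->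
  exists x g, (forall i, g i <= B i) /\ (forall k, Rel (pre x k) (pre g k)) /\
    forall p N, exists n, N <= n /\ pre (xs n) p = pre x p.
Proof.
  intros HB HR.
  set (z := fun n j => if Nat.even j then b2n (xs n (Nat.div2 j))
                       else Nat.min (gs n (Nat.div2 j)) (B (Nat.div2 j))).
  destruct (bounded_cluster_point z (fun j => if Nat.even j then 1 else B (Nat.div2 j)))
    as [y [Hy1 Hy2]].
  { intros n j. unfold z. destruct (Nat.even j); [destruct (xs n _); simpl|]; lia. }
  set (x := fun i => negb (Nat.eqb (y (2 * i)) 0)).
  set (g := fun i => y (2 * i + 1)).
  assert (Hagree : forall p N, exists n, N <= n /\ (forall i, i < p -> xs n i = x i) /\
                     (forall i, i < p -> Nat.min (gs n i) (B i) = g i)).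
  { intros p N. destruct (Hy2 (2 * p) N) as [n [Hn1 Hn2]]. exists n. split; auto.
    pose proof (pre_inj _ _ _ Hn2) as E. split.
    - intros i Hi. specialize (E (2 * i) ltac:(lia)). unfold z in E.
      rewrite Nat.even_even, Nat.div2_double in E. unfold x. rewrite <- E.
      destruct (xs n i); reflexivity.
    - intros i Hi. specialize (E (2 * i + 1) ltac:(lia)). unfold z in E.
      rewrite Nat.even_odd, Nat.div2_odd' in E. exact E. }
  exists x, g. split; [|split].
  - intros i. specialize (Hy1 (2 * i + 1)). cbv beta in Hy1.
    rewrite Nat.even_odd, Nat.div2_odd' in Hy1. exact Hy1.
  - intros k. destruct (Hagree k k) as [n [Hn1 [Hn2 Hn3]]].
    specialize (HR n k Hn1).
    rewrite (pre_ext (xs n) x k Hn2), (pre_ext (gs n) g k) in HR; auto.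
    intros i Hi. rewrite <- Hn3 by auto. specialize (HB n i ltac:(lia)). lia.
  - intros p N. destruct (Hagree p N) as [n [Hn1 [Hn2 _]]]. exists n. split; auto.
    apply pre_ext. auto.
Qed.

Lemma Cf_iff_witness_strings Rel f x :
  Cf Rel f x <-> forall n, exists tau, witness_string Rel f (pre x n) tau.
Proof.
  split.
  - intros [g [Hg HR]] n. exists (pre g n). unfold witness_string. rewrite !length_pre.
    split; [auto|split].
    + intros i Hi. rewrite nth_pre by auto. auto.
    + intros k Hk. rewrite !firstn_pre by auto. auto.
  - intros H. apply choice in H as [tau Ht].
    destruct (bounded_witness_limit Rel f (fun _ => x) (fun n i => nth i (tau n) 0))
      as [x' [g [Hg1 [Hg2 Hg3]]]].
    + intros n i Hi. destruct (Ht n) as [_ [H2 _]]. apply H2. rewrite length_pre. auto.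
    + intros n k Hk. destruct (Ht n) as [H1 [_ H3]]. rewrite length_pre in *.
      rewrite pre_nth, <- (firstn_pre x n k Hk) by lia. apply H3. auto.
    + exists g. split; auto. intros n.
      destruct (Hg3 n 0) as [m [_ Hm]]. rewrite Hm. auto.
Qed.

Lemma Pi01_Cf Rel f : recursive_pred Rel -> Pi01 f (Cf Rel f).
Proof.
  intros HR. destruct (Pi01_witness_strings Rel f HR) as [e He]. exists e. intros x.
  rewrite Cf_iff_witness_strings. apply He.
Qed.

Open Scope R_scope.

Lemma half_pow_pos n : 0 < (/2)^n.
Proof. apply pow_lt. lra. Qed.

Lemma half_pow_S_lt n : (/2)^(S n) < (/2)^n.
Proof. simpl. pose proof (half_pow_pos n). lra. Qed.

Lemma half_pow_le m n : (m <= n)%nat -> (/2)^n <= (/2)^m.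
Proof. induction 1 as [|n _ IH]; [lra|]. pose proof (half_pow_S_lt n). lra. Qed.

Lemma half_pow_lt m n : (m < n)%nat -> (/2)^n < (/2)^m.
Proof. intros H. pose proof (half_pow_le (S m) n H). pose proof (half_pow_S_lt m). lra. Qed.

Definition cyl (sg : list bool) (x : cantor) : Prop := pre x (length sg) = sg.
Definition cyl_weight (s : R) (sg : list bool) : R := Rpower ((/2)^(length sg)) s.

(* Covers are sequences of cylinders with holes ([None]), so that subfamilies of a cover
   are again covers. *)
Definition entry_weight (s : R) (o : option (list bool)) : R :=
  match o with Some sg => cyl_weight s sg | None => 0 end.
Fixpoint cover_sum (s : R) (cov : nat -> option (list bool)) (N : nat) : R :=
  match N with O => 0 | S N => cover_sum s cov N + entry_weight s (cov N) end.
Definition cyl_cover (m : nat) (A : cantor -> Prop) (cov : nat -> option (list bool)) : Prop :=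
  (forall i sg, cov i = Some sg -> (m <= length sg)%nat) /\
  (forall x, A x -> exists i sg, cov i = Some sg /\ cyl sg x).

Definition covered (s : R) (m : nat) (A : cantor -> Prop) (a : R) : Prop :=
  exists cov, cyl_cover m A cov /\ forall N, cover_sum s cov N <= a.

Definition net_ge (s : R) (m : nat) (eps : R) (A : cantor -> Prop) : Prop :=
  forall a, covered s m A a -> eps <= a.

Lemma cyl_weight_pos s sg : 0 < cyl_weight s sg.
Proof. unfold cyl_weight, Rpower. apply exp_pos. Qed.

Lemma entry_weight_nonneg s o : 0 <= entry_weight s o.
Proof. destruct o; simpl; [apply Rlt_le, cyl_weight_pos | lra]. Qed.

Lemma cover_sum_mono s cov N N' : (N <= N')%nat -> cover_sum s cov N <= cover_sum s cov N'.
Proof. induction 1 as [|N' _ IH]; [lra|]. simpl. pose proof (entry_weight_nonneg s (cov N')). lra. Qed.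

Lemma net_ge_subset s m eps A B : net_ge s m eps A -> (forall x, A x -> B x) -> net_ge s m eps B.
Proof. intros H HAB a [cov [[H1 H2] Ha]]. apply H. exists cov. repeat split; auto. Qed.

Lemma net_ge_le s m eps eps' A : net_ge s m eps A -> eps' <= eps -> net_ge s m eps' A.
Proof. intros H He a Ha. specialize (H a Ha). lra. Qed.

Lemma first_difference (x y : cantor) L : pre x L <> pre y L ->
  exists n, (n < L)%nat /\ (forall k, (k < n)%nat -> x k = y k) /\ x n <> y n.
Proof.
  intros H. apply NNPP. intros Hn. apply H, pre_ext.
  intros i. induction i as [i IH] using lt_wf_ind. intros Hi.
  apply NNPP. intros Hxy. apply Hn. exists i. repeat split; auto.
  intros k Hk. apply IH; lia.
Qed.

Lemma diam_le_cyl sg : diam_le (cyl sg) ((/2)^(length sg)).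
Proof.
  intros x y Hx Hy n Hagree Hd. apply half_pow_le.
  destruct (Nat.lt_ge_cases n (length sg)) as [Hl|Hl]; auto.
  exfalso. apply Hd. unfold cyl in *.
  rewrite <- Hy in Hx at 2. apply (pre_inj _ _ _ Hx). auto.
Qed.

Lemma least_half_pow_le t : 0 < t ->
  exists L, (/2)^L <= t /\ forall L', (/2)^L' <= t -> (L <= L')%nat.
Proof.
  intros Ht. destruct (pow_lt_1_zero (/2) ltac:(rewrite Rabs_right; lra) t Ht) as [N HN].
  specialize (HN N (le_n N)). rewrite Rabs_right in HN by (apply Rle_ge, Rlt_le, half_pow_pos).
  apply Rlt_le in HN. clear -HN. induction N as [N IH] using lt_wf_ind.
  destruct (classic (exists L', (/2)^L' <= t /\ (L' < N)%nat)) as [[L' [H1 H2]]|Hn].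
  - exact (IH L' H2 H1).
  - exists N. split; [lra|]. intros L' HL'. apply Nat.nlt_ge. intros Hc. apply Hn. eauto.
Qed.

Lemma diam_le_sub_cyl U m t : 0 < t <= (/2)^m -> diam_le U t ->
  exists sg, (m <= length sg)%nat /\ (/2)^(length sg) <= t /\ forall y, U y -> cyl sg y.
Proof.
  intros Ht Hdiam. destruct (least_half_pow_le t (proj1 Ht)) as [L [HL1 HL2]].
  assert (Hm : (m <= L)%nat).
  { apply Nat.nlt_ge. intros Hc. pose proof (half_pow_lt L m Hc). lra. }
  destruct (classic (exists x, U x)) as [[x Hx]|Hn].
  - exists (pre x L). rewrite length_pre. do 2 (split; auto). intros y Hy.
    unfold cyl. rewrite length_pre. apply NNPP. intros Hne.
    destruct (first_difference y x L Hne) as [n [Hn1 [Hn2 Hn3]]].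
    specialize (HL2 n (Hdiam y x Hy Hx n Hn2 Hn3)). lia.
  - exists (repeat false L). rewrite repeat_length. do 2 (split; auto).
    intros y Hy. exfalso. eauto.
Qed.

Lemma Hs_delta_ge_of_net_ge s m eps A : 0 < s -> net_ge s m eps A -> Hs_delta_ge s ((/2)^m) eps A.
Proof.
  intros Hs H U r Hr Hdiam Hcov a Ha.
  assert (Hsg := fun i => diam_le_sub_cyl (U i) m (r i) (Hr i) (Hdiam i)).
  apply choice in Hsg as [c Hc].
  apply H. exists (fun i => Some (c i)). split.
  - split.
    + intros i sg E. injection E as <-. apply Hc.
    + intros x Hx. destruct (Hcov x Hx) as [i Hi]. exists i, (c i). split; auto. apply Hc, Hi.
  - assert (Hp : forall N, cover_sum s (fun i => Some (c i)) (S N)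
                           <= sum_f_R0 (fun i => Rpower (r i) s) N).
    { assert (Hw : forall i, cyl_weight s (c i) <= Rpower (r i) s).
      { intros i. apply Rle_Rpower_l; [lra|]. split; [apply half_pow_pos | apply Hc]. }
      intros N. induction N as [|N IH]; cbn [cover_sum sum_f_R0 entry_weight] in *.
      - pose proof (Hw 0%nat). lra.
      - pose proof (Hw (S N)). lra. }
    intros [|N].
    + simpl. specialize (Ha 0%nat). simpl in Ha. pose proof (exp_pos (s * ln (r 0%nat))).
      unfold Rpower in Ha. lra.
    + eapply Rle_trans; [apply Hp | apply Ha].
Qed.

(* Holes of a cylinder cover are filled by empty sets of diameter [(e 2^-(i+1))^(1/s)],
   whose weights add up to less than [e]. *)
Lemma delta_cover_of_cyl_cover s m delta e A cov :
  0 < s -> 0 < e <= Rpower delta s -> (/2)^m <= delta -> cyl_cover m A cov ->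
  exists U r, (forall i, 0 < r i <= delta) /\ (forall i, diam_le (U i) (r i)) /\
    (forall x, A x -> exists i, U i x) /\
    forall N, sum_f_R0 (fun i => Rpower (r i) s) N <= cover_sum s cov (S N) + e.
Proof.
  intros Hs [He1 He2] Hm [Hlen Hcov].
  assert (Hd : 0 < delta) by (pose proof (half_pow_pos m); lra).
  set (r := fun i => match cov i with
                     | Some sg => (/2)^(length sg)
                     | None => Rpower (e * (/2)^(S i)) (/s) end).
  exists (fun i => match cov i with Some sg => cyl sg | None => fun _ => False end), r.
  assert (Hpw : forall i, Rpower (r i) s =
            match cov i with Some sg => cyl_weight s sg | None => e * (/2)^(S i) end).
  { intros i. unfold r. destruct (cov i); auto. rewrite Rpower_mult.
    replace (/ s * s) with 1 by (field; lra). apply Rpower_1.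
    apply Rmult_lt_0_compat; auto. apply half_pow_pos. }
  split; [|split; [|split]].
  - intros i. unfold r. destruct (cov i) eqn:E; split.
    + apply half_pow_pos.
    + eapply Rle_trans; [|exact Hm]. apply half_pow_le. eauto.
    + apply exp_pos.
    + replace delta with (Rpower (Rpower delta s) (/s))
        by (rewrite Rpower_mult, Rinv_r, Rpower_1 by lra; reflexivity).
      apply Rle_Rpower_l; [apply Rlt_le, Rinv_0_lt_compat; auto|].
      pose proof (half_pow_le 0 (S i) ltac:(lia)) as H0. rewrite pow_O in H0.
      pose proof (half_pow_pos (S i)). split; [nra|]. nra.
  - intros i. unfold r. destruct (cov i); [apply diam_le_cyl | intros x y []].
  - intros x Hx. destruct (Hcov x Hx) as [i [sg [E1 E2]]]. exists i. rewrite E1. auto.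
  - assert (Hsum : forall N, sum_f_R0 (fun i => Rpower (r i) s) N + e * (/2)^(S N)
                             <= cover_sum s cov (S N) + e).
    { induction N as [|N IH]; cbn [sum_f_R0 cover_sum] in *; rewrite Hpw.
      - destruct (cov 0%nat); simpl; [pose proof (cyl_weight_pos s l)|]; lra.
      - pose proof (Rmult_lt_compat_l e _ _ He1 (half_pow_S_lt (S N))).
        destruct (cov (S N)); simpl entry_weight; simpl in *; lra. }
    intros N. specialize (Hsum N). pose proof (half_pow_pos (S N)). nra.
Qed.

Lemma net_ge_of_Hs_delta_ge s delta eps A m : 0 < s -> Hs_delta_ge s delta eps A ->
  (/2)^m <= delta -> net_ge s m eps A.
Proof.
  intros Hs H Hm a [cov [Hc Ha]].
  assert (Hpos : 0 < Rpower delta s) by apply exp_pos.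
  apply Rnot_lt_le. intros Hlt.
  set (e := Rmin ((eps - a) / 2) (Rpower delta s)).
  assert (He : 0 < e <= Rpower delta s)
    by (split; [apply Rmin_glb_lt; lra | apply Rmin_r]).
  destruct (delta_cover_of_cyl_cover s m delta e A cov Hs He Hm Hc) as [U [r [Hr [Hd [Hcov Hsum]]]]].
  assert (Hle : eps <= a + e).
  { apply (H U r Hr Hd Hcov). intros N. specialize (Hsum N). specialize (Ha (S N)). lra. }
  pose proof (Rmin_l ((eps - a) / 2) (Rpower delta s)). unfold e in Hle. lra.
Qed.

Fixpoint cover_sum_filter (s : R) (P : option (list bool) -> bool)
    (cov : nat -> option (list bool)) (N : nat) : R :=
  match N with
  | O => 0
  | S N => cover_sum_filter s P cov N + (if P (cov N) then entry_weight s (cov N) else 0)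
  end.

Lemma cover_sum_filter_split s P cov N :
  cover_sum_filter s P cov N + cover_sum_filter s (fun o => negb (P o)) cov N = cover_sum s cov N.
Proof. induction N; simpl; [lra|]. destruct (P (cov N)); simpl; lra. Qed.

Lemma cover_sum_filter_nonneg s P cov N : 0 <= cover_sum_filter s P cov N.
Proof.
  induction N; simpl; [lra|]. pose proof (entry_weight_nonneg s (cov N)). destruct (P (cov N)); lra.
Qed.

Lemma cover_sum_filter_mono s P cov N N' :
  (N <= N')%nat -> cover_sum_filter s P cov N <= cover_sum_filter s P cov N'.
Proof.
  induction 1 as [|N' _ IH]; simpl; [lra|].
  pose proof (entry_weight_nonneg s (cov N')). destruct (P (cov N')); lra.
Qed.

Lemma cover_sum_filter_ext s P Q cov N : (forall o, P o = Q o) ->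
  cover_sum_filter s P cov N = cover_sum_filter s Q cov N.
Proof. intros H. induction N; simpl; auto. rewrite IHN, H. reflexivity. Qed.

Lemma cover_sum_filter_orb s P Q cov N : (forall o, P o && Q o = false) ->
  cover_sum_filter s (fun o => P o || Q o) cov N =
  cover_sum_filter s P cov N + cover_sum_filter s Q cov N.
Proof.
  intros H. induction N; simpl; [lra|]. rewrite IHN. specialize (H (cov N)).
  destruct (P (cov N)), (Q (cov N)); simpl in *; try discriminate; lra.
Qed.

Lemma cover_sum_filter_ge_entry s P cov N i :
  (i < N)%nat -> P (cov i) = true -> entry_weight s (cov i) <= cover_sum_filter s P cov N.
Proof.
  intros Hi HP. induction N as [|N IH]; [lia|]. simpl.
  pose proof (cover_sum_filter_nonneg s P cov N). pose proof (entry_weight_nonneg s (cov N)).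
  destruct (Nat.eq_dec i N) as [->|]; [rewrite HP; lra|].
  specialize (IH ltac:(lia)). destruct (P (cov N)); lra.
Qed.

Lemma cover_sum_restrict s (P : option (list bool) -> bool) (cov : nat -> option (list bool)) N :
  cover_sum s (fun i => if P (cov i) then cov i else None) N = cover_sum_filter s P cov N.
Proof. induction N; simpl; auto. rewrite IHN. destruct (P (cov N)); simpl; lra. Qed.

Definition list_weight (s : R) (L : list (list bool)) : R :=
  fold_right (fun t acc => cyl_weight s t + acc) 0 L.

Definition is_entry (t : list bool) (o : option (list bool)) : bool :=
  match o with Some t' => if list_eq_dec bool_dec t' t then true else false | None => false end.

Definition in_list (L : list (list bool)) (o : option (list bool)) : bool :=
  match o with Some t => if in_dec (list_eq_dec bool_dec) t L then true else false | None => false end.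

Lemma list_weight_le_cover_sum_filter s cov N L : NoDup L ->
  (forall t, In t L -> exists i, (i < N)%nat /\ cov i = Some t) ->
  list_weight s L <= cover_sum_filter s (in_list L) cov N.
Proof.
  induction L as [|t L IH]; intros Hnd Hall; simpl; [apply cover_sum_filter_nonneg|].
  inversion Hnd as [|? ? Ht Hnd']; subst.
  assert (Hsplit : cover_sum_filter s (in_list (t :: L)) cov N =
                   cover_sum_filter s (is_entry t) cov N + cover_sum_filter s (in_list L) cov N).
  { rewrite <- cover_sum_filter_orb.
    - apply cover_sum_filter_ext. intros [t'|]; unfold in_list, is_entry; auto.
      destruct (list_eq_dec bool_dec t' t), (in_dec (list_eq_dec bool_dec) t' (t :: L)),
        (in_dec (list_eq_dec bool_dec) t' L); simpl in *; intuition congruence.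
    - intros [t'|]; unfold in_list, is_entry; auto.
      destruct (list_eq_dec bool_dec t' t), (in_dec (list_eq_dec bool_dec) t' L); subst; tauto. }
  rewrite Hsplit.
  destruct (Hall t (or_introl eq_refl)) as [i [Hi Hti]].
  pose proof (cover_sum_filter_ge_entry s (is_entry t) cov N i Hi) as Hw.
  rewrite Hti in Hw. simpl in Hw. destruct (list_eq_dec bool_dec t t); [|tauto].
  pose proof (IH Hnd' (fun t' Ht' => Hall t' (or_intror Ht'))). specialize (Hw eq_refl). lra.
Qed.

Lemma indices_bound (L : list (list bool)) (cov : nat -> option (list bool)) :
  (forall t, In t L -> exists i, cov i = Some t) ->
  exists N, forall t, In t L -> exists i, (i < N)%nat /\ cov i = Some t.
Proof.
  induction L as [|t L IH]; intros H; [exists 0%nat; intros t []|].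
  destruct IH as [N1 H1]; [intros t' Ht'; apply H; right; auto|].
  destruct (H t (or_introl eq_refl)) as [i Hi]. exists (N1 + S i)%nat.
  intros t' [<-|Ht']; [exists i; split; auto; lia|].
  destruct (H1 t' Ht') as [j [Hj1 Hj2]]. exists j. split; auto. lia.
Qed.

Definition merge_covers (L : list (list bool)) (cov V : nat -> option (list bool)) (j : nat) :=
  if Nat.even j then (if in_list L (cov (Nat.div2 j)) then None else cov (Nat.div2 j))
  else V (Nat.div2 j).

Lemma cover_sum_merge_covers s L cov V N :
  cover_sum s (merge_covers L cov V) (2 * N) =
  cover_sum_filter s (fun o => negb (in_list L o)) cov N + cover_sum s V N.
Proof.
  induction N; [simpl; lra|].
  replace (2 * S N)%nat with (S (2 * N + 1)) by lia.
  cbn [cover_sum cover_sum_filter]. replace (2 * N + 1)%nat with (S (2 * N)) by lia.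
  cbn [cover_sum]. rewrite IHN. unfold merge_covers.
  replace (S (2 * N)) with (2 * N + 1)%nat by lia.
  rewrite Nat.even_even, Nat.even_odd, Nat.div2_double, Nat.div2_odd'.
  destruct (in_list L (cov N)); simpl; lra.
Qed.

(* If [cov] is a cover of [B] whose weight [b] is within [b - nu] of optimal, any finite
   family [L] of its cylinders weighs at most [b - nu] more than any cover [V] of the part
   of [B] inside [L]: otherwise replacing [L] by [V] would beat [nu]. *)
Lemma list_weight_le_local_cover s m B cov V b nu beta L :
  cyl_cover m B cov -> (forall N, cover_sum s cov N <= b) ->
  (forall a, covered s m B a -> nu <= a) ->
  NoDup L -> (forall t, In t L -> exists i, cov i = Some t) ->
  (forall i sg, V i = Some sg -> (m <= length sg)%nat) ->
  (forall x, B x -> (exists t, In t L /\ cyl t x) -> exists i sg, V i = Some sg /\ cyl sg x) ->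
  (forall N, cover_sum s V N <= beta) ->
  list_weight s L <= b - nu + beta.
Proof.
  intros [Hlen Hcov] Hb Hnu Hnd HL HV1 HV2 Hbeta.
  destruct (indices_bound L cov HL) as [N0 HN0].
  assert (Hout : forall N, cover_sum_filter s (fun o => negb (in_list L o)) cov N
                           <= b - list_weight s L).
  { intros N.
    pose proof (cover_sum_filter_mono s (fun o => negb (in_list L o)) cov N (N + N0) ltac:(lia)).
    pose proof (cover_sum_filter_split s (in_list L) cov (N + N0)). pose proof (Hb (N + N0)%nat).
    assert (list_weight s L <= cover_sum_filter s (in_list L) cov (N + N0)); [|lra].
    apply list_weight_le_cover_sum_filter; auto.
    intros t Ht. destruct (HN0 t Ht) as [i [Hi1 Hi2]]. exists i. split; auto. lia. }
  assert (Hc : nu <= b - list_weight s L + beta); [|lra].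
  apply Hnu. exists (merge_covers L cov V). split; [split|].
  - intros j sg E. unfold merge_covers in E. destruct (Nat.even j); eauto.
    destruct (in_list L (cov (Nat.div2 j))); [discriminate|eauto].
  - intros x Hx. destruct (Hcov x Hx) as [i [sg [E1 E2]]].
    destruct (in_list L (Some sg)) eqn:EL.
    + destruct (HV2 x Hx) as [j [sg' [F1 F2]]].
      { exists sg. split; auto. unfold in_list in EL. destruct (in_dec _ sg L); [auto|discriminate]. }
      exists (2 * j + 1)%nat, sg'. unfold merge_covers. rewrite Nat.even_odd, Nat.div2_odd'. auto.
    + exists (2 * i)%nat, sg. unfold merge_covers.
      rewrite Nat.even_even, Nat.div2_double, E1, EL. auto.
  - intros N. eapply Rle_trans; [apply (cover_sum_mono s _ N (2 * N)); lia|].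
    rewrite cover_sum_merge_covers. pose proof (Hout N). pose proof (Hbeta N). lra.
Qed.

Lemma sum_f_R0_indicator j c K :
  (j <= K)%nat -> sum_f_R0 (fun k => if Nat.eqb j k then c else 0) K = c.
Proof.
  induction K; intros H; simpl.
  - replace j with 0%nat by lia. reflexivity.
  - destruct (Nat.eq_dec j (S K)) as [->|].
    + rewrite Nat.eqb_refl, sum_eq_R0; [lra|].
      intros k Hk. destruct (Nat.eqb_spec (S K) k); [lia|reflexivity].
    + rewrite IHK by lia. destruct (Nat.eqb_spec j (S K)); [lia|lra].
Qed.

Lemma list_weight_partition s L (kf : list bool -> nat) K : (forall t, In t L -> (kf t <= K)%nat) ->
  list_weight s L = sum_f_R0 (fun k => list_weight s (filter (fun t => Nat.eqb (kf t) k) L)) K.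
Proof.
  induction L as [|t L IH]; intros H; simpl.
  - rewrite sum_eq_R0; auto.
  - rewrite (sum_eq _ (fun k => (if Nat.eqb (kf t) k then cyl_weight s t else 0)
                                + list_weight s (filter (fun t => Nat.eqb (kf t) k) L))).
    + rewrite sum_plus, sum_f_R0_indicator, <- IH; [reflexivity | |]; intros; apply H; simpl; auto.
    + intros k Hk. destruct (Nat.eqb (kf t) k); simpl; lra.
Qed.

Lemma sum_f_R0_at_most_one (Pk : nat -> bool) c K : 0 <= c ->
  (forall k k', (k <= K)%nat -> (k' <= K)%nat -> Pk k = true -> Pk k' = true -> k = k') ->
  sum_f_R0 (fun k => if Pk k then c else 0) K <= c.
Proof.
  induction K; intros Hc H; simpl; [destruct (Pk 0%nat); lra|].
  destruct (Pk (S K)) eqn:E.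
  - rewrite sum_eq_R0; [lra|].
    intros k Hk. destruct (Pk k) eqn:E'; auto. specialize (H k (S K) ltac:(lia) ltac:(lia) E' E). lia.
  - assert (sum_f_R0 (fun k => if Pk k then c else 0) K <= c); [|lra].
    apply IHK; auto.
Qed.

Lemma sum_cover_sum_filter_disjoint K (Pk : nat -> option (list bool) -> bool) s cov N :
  (forall k k' o, (k <= K)%nat -> (k' <= K)%nat -> Pk k o = true -> Pk k' o = true -> k = k') ->
  sum_f_R0 (fun k => cover_sum_filter s (Pk k) cov N) K <= cover_sum s cov N.
Proof.
  intros H. induction N; simpl.
  - rewrite sum_eq_R0; auto. lra.
  - rewrite sum_plus.
    pose proof (sum_f_R0_at_most_one (fun k => Pk k (cov N)) (entry_weight s (cov N)) K
                  (entry_weight_nonneg s _) (fun k k' Hk Hk' => H k k' (cov N) Hk Hk')).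
    lra.
Qed.

Lemma sum_f_R0_sup_le K (P : nat -> nat -> R) (W : nat -> R) (b : R) :
  (forall k N N', (N <= N')%nat -> P k N <= P k N') ->
  (forall k, (k <= K)%nat -> forall beta, (forall N, P k N <= beta) -> W k <= beta) ->
  (forall N, sum_f_R0 (fun k => P k N) K <= b) -> sum_f_R0 W K <= b.
Proof.
  intros Hm HW Hb. apply Rnot_lt_le. intros Hlt.
  set (gam := (sum_f_R0 W K - b) / (2 * (INR K + 1))).
  assert (HK : 0 < INR K + 1) by (pose proof (pos_INR K); lra).
  assert (Hg : 0 < gam) by (apply Rdiv_lt_0_compat; lra).
  assert (Hex : forall k, (k <= K)%nat -> exists N, W k - gam < P k N).
  { intros k Hk. apply NNPP. intros Hn.
    assert (W k <= W k - gam); [|lra].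
    apply HW; auto. intros N. apply Rnot_lt_le. intros Hc. apply Hn. eauto. }
  destruct (eventually_all_le (fun k N => W k - gam < P k N) K) as [N HN]; auto.
  { intros v N N' HN HP. specialize (Hm v N N' HN). lra. }
  assert (Hsum : sum_f_R0 (fun k => W k - gam) K <= sum_f_R0 (fun k => P k N) K)
    by (apply sum_Rle; intros; apply Rlt_le, HN; auto).
  rewrite minus_sum, sum_cte in Hsum. specialize (Hb N).
  replace (gam * INR (S K)) with ((sum_f_R0 W K - b) / 2) in Hsum
    by (unfold gam; rewrite S_INR; field; lra).
  lra.
Qed.

Lemma sum_half_pow K : sum_f_R0 (fun k => (/2)^(S k)) K = 1 - (/2)^(S K).
Proof. induction K; [simpl; lra|]. cbn [sum_f_R0]. rewrite IHK. simpl. lra. Qed.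

Fixpoint cover_list (T : nat -> option (list bool)) (N : nat) : list (list bool) :=
  match N with
  | O => []
  | S N => match T N with Some t => t :: cover_list T N | None => cover_list T N end
  end.

Lemma list_weight_cover_list s T N : list_weight s (cover_list T N) = cover_sum s T N.
Proof. induction N; simpl; auto. destruct (T N); simpl; lra. Qed.

Lemma in_cover_list T N t : In t (cover_list T N) <-> exists j, (j < N)%nat /\ T j = Some t.
Proof.
  induction N; simpl; [split; [intros []|intros [j [Hj _]]; lia]|].
  destruct (T N) eqn:E; simpl; rewrite ?IHN; split.
  - intros [<-|[j [Hj1 Hj2]]]; [exists N|exists j]; auto.
  - intros [j [Hj1 Hj2]]. destruct (Nat.eq_dec j N) as [->|]; [left; congruence|].
    right. exists j. split; auto. lia.
  - intros [j [Hj1 Hj2]]. exists j; split; auto.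
  - intros [j [Hj1 Hj2]]. destruct (Nat.eq_dec j N) as [->|]; [congruence|]. exists j. split; auto. lia.
Qed.

Lemma NoDup_cover_list T N :
  (forall j j' t, T j = Some t -> T j' = Some t -> j = j') -> NoDup (cover_list T N).
Proof.
  intros Hinj. induction N; simpl; [constructor|].
  destruct (T N) eqn:E; auto. constructor; auto.
  intros Hin. apply in_cover_list in Hin as [j [Hj1 Hj2]].
  specialize (Hinj _ _ _ E Hj2). lia.
Qed.

Lemma net_inf_approx s m B c : (exists a, covered s m B a /\ a < c) ->
  exists nu, (forall a, covered s m B a -> nu <= a) /\ nu < c /\
    forall gam, 0 < gam -> exists a, covered s m B a /\ a < nu + gam.
Proof.
  intros [a0 [H0 Hc0]].
  set (E := fun y => covered s m B (- y)).
  assert (Hb : bound E).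
  { exists 0. intros y [cov [_ Ha]]. specialize (Ha 0%nat). simpl in Ha. lra. }
  destruct (completeness E Hb ltac:(exists (- a0); unfold E; rewrite Ropp_involutive; auto))
    as [l [Hl1 Hl2]].
  exists (- l). split; [|split].
  - intros a Ha. assert (E (- a)) by (unfold E; rewrite Ropp_involutive; auto).
    specialize (Hl1 _ H). lra.
  - assert (E (- a0)) by (unfold E; rewrite Ropp_involutive; auto). specialize (Hl1 _ H). lra.
  - intros gam Hg. apply NNPP. intros Hn.
    assert (l <= l - gam); [|lra].
    apply Hl2. intros y Hy. apply Rnot_lt_le. intros Hc. apply Hn. exists (- y). split; auto. lra.
Qed.

Definition least (P : nat -> Prop) : nat :=
  match excluded_middle_informative (exists n, P n /\ forall n', P n' -> (n <= n')%nat) with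
  | left H => proj1_sig (constructive_indefinite_description _ H)
  | right _ => 0%nat
  end.

Lemma least_spec (P : nat -> Prop) : (exists n, P n) ->
  P (least P) /\ forall n, P n -> (least P <= n)%nat.
Proof.
  intros [n Hn].
  assert (E : exists n, P n /\ forall n', P n' -> (n <= n')%nat).
  { clear -Hn. induction n as [n IH] using lt_wf_ind.
    destruct (classic (exists n', P n' /\ (n' < n)%nat)) as [[n' [H1 H2]]|Hno].
    - exact (IH n' H2 H1).
    - exists n. split; auto. intros n' Hn'. apply Nat.nlt_ge. intros Hc. apply Hno. eauto. }
  unfold least. destruct (excluded_middle_informative _) as [H|H]; [|tauto].
  destruct (constructive_indefinite_description _ H) as [k Hk]. exact Hk.
Qed.

Definition prefix (t sg : list bool) : Prop :=
  (length t <= length sg)%nat /\ firstn (length t) sg = t.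

Lemma prefix_of_cyl t sg x : cyl sg x -> cyl t x -> (length t <= length sg)%nat -> prefix t sg.
Proof. unfold cyl, prefix. intros H1 H2 Hl. split; auto. rewrite <- H1, firstn_pre; auto. Qed.

Lemma prefix_comparable t t' sg : prefix t sg -> prefix t' sg -> prefix t t' \/ prefix t' t.
Proof.
  unfold prefix. intros [H1 H2] [H3 H4].
  destruct (Nat.le_ge_cases (length t) (length t')); [left|right]; split; auto.
  - rewrite <- H4, firstn_firstn, Nat.min_l by auto. exact H2.
  - rewrite <- H2, firstn_firstn, Nat.min_l by auto. exact H4.
Qed.

Lemma cyl_pre x L : cyl (pre x L) x.
Proof. unfold cyl. rewrite length_pre. reflexivity. Qed.

Section OutermostCylinders.

Variables (s : R) (m : nat) (Ak : nat -> cantor -> Prop).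
Variable SS : nat -> nat -> option (list bool).
Hypothesis HSS : forall k, cyl_cover m (Ak k) (SS k).

Definition occurs (t : list bool) : Prop := exists k i, SS k i = Some t.

Definition outermost (t : list bool) : Prop :=
  occurs t /\ forall t', occurs t' -> prefix t' t -> t' = t.

Definition first_cover (t : list bool) : nat := least (fun k => exists i, SS k i = Some t).

Definition first_index (t : list bool) : nat := least (fun i => SS (first_cover t) i = Some t).

(* Each outermost cylinder, listed once: at the code of its first occurrence in [SS]. *)
Definition outermost_cover (j : nat) : option (list bool) :=
  match SS (cfst j) (csnd j) with
  | Some t =>
      if excluded_middle_informative
           (outermost t /\ cfst j = first_cover t /\ csnd j = first_index t)
      then Some t else None
  | None => None
  end.

Lemma first_occurrence t : occurs t -> SS (first_cover t) (first_index t) = Some t.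
Proof.
  intros Ht. destruct (least_spec _ Ht) as [Hi _].
  exact (proj1 (least_spec (fun i => SS (first_cover t) i = Some t) Hi)).
Qed.

Lemma outermost_cover_Some j t : outermost_cover j = Some t ->
  outermost t /\ cfst j = first_cover t /\ csnd j = first_index t.
Proof.
  unfold outermost_cover. destruct (SS (cfst j) (csnd j)); [|discriminate].
  destruct (excluded_middle_informative _) as [Hm|]; [|discriminate]. injection 1 as <-. exact Hm.
Qed.

Lemma outermost_cover_inj j j' t : outermost_cover j = Some t -> outermost_cover j' = Some t -> j = j'.
Proof.
  intros E E'.
  apply outermost_cover_Some in E as [_ [E1 E2]]. apply outermost_cover_Some in E' as [_ [E1' E2']].
  rewrite <- (cpair_cfst_csnd j), <- (cpair_cfst_csnd j'). congruence.
Qed.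

Lemma outermost_cover_first t :
  outermost t -> outermost_cover (cpair (first_cover t) (first_index t)) = Some t.
Proof.
  intros Ht. unfold outermost_cover. rewrite cfst_cpair, csnd_cpair, first_occurrence by apply Ht.
  destruct (excluded_middle_informative _) as [|Hn]; auto. exfalso. auto.
Qed.

Lemma outermost_prefix_unique t t' sg :
  outermost t -> outermost t' -> prefix t sg -> prefix t' sg -> t = t'.
Proof.
  intros [Ht1 Ht2] [Ht1' Ht2'] H1 H2.
  destruct (prefix_comparable t t' sg H1 H2) as [P|P]; [apply Ht2'|symmetry; apply Ht2]; auto.
Qed.

(* The shortest cylinder around [x] that occurs in [SS] is outermost. *)
Lemma cyl_cover_outermost_cover A :
  (forall x, A x -> exists k, Ak k x) -> cyl_cover m A outermost_cover.
Proof.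
  intros HA. split.
  - intros j t E. pose proof (outermost_cover_Some j t E) as [[[k [i Hki]] _] _].
    exact (proj1 (HSS k) i t Hki).
  - intros x Hx. destruct (HA x Hx) as [k Hk]. destruct (proj2 (HSS k) x Hk) as [i [sg [E1 E2]]].
    assert (Hex : exists L, occurs (pre x L)).
    { exists (length sg). unfold cyl in E2. rewrite E2. exists k, i. exact E1. }
    destruct (least_spec _ Hex) as [HL1 HL2].
    set (L := least (fun L => occurs (pre x L))) in *.
    assert (Hmax : outermost (pre x L)).
    { split; auto. intros t' Hr [Hp1 Hp2]. rewrite length_pre in Hp1.
      rewrite firstn_pre in Hp2 by auto. rewrite <- Hp2 in Hr |- *.
      apply HL2 in Hr. f_equal. lia. }
    exists (cpair (first_cover (pre x L)) (first_index (pre x L))), (pre x L).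
    split; [apply outermost_cover_first, Hmax | apply cyl_pre].
Qed.

Definition extends_list (L : list (list bool)) (o : option (list bool)) : bool :=
  match o with
  | Some sg => if excluded_middle_informative (exists t, In t L /\ prefix t sg) then true else false
  | None => false
  end.

Variables bb nu : nat -> R.
Hypothesis Hbb : forall k N, cover_sum s (SS k) N <= bb k.
Hypothesis Hnu : forall k a, covered s m (Ak k) a -> nu k <= a.
Hypothesis Hmono : forall k x, Ak k x -> Ak (S k) x.

Definition outermost_first_in (k N : nat) : list (list bool) :=
  filter (fun t => Nat.eqb (first_cover t) k) (cover_list outermost_cover N).

Lemma in_outermost_first_in k N t :
  In t (outermost_first_in k N) -> outermost t /\ first_cover t = k /\ (k < N)%nat.
Proof.
  unfold outermost_first_in. rewrite filter_In, in_cover_list, Nat.eqb_eq.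
  intros [[j [Hj E]] <-]. apply outermost_cover_Some in E as [Ht [Hk _]].
  do 2 (split; auto). pose proof (cpair_ge_l (cfst j) (csnd j)). rewrite cpair_cfst_csnd in H. lia.
Qed.

(* Outermost cylinders first occurring in [SS k] can be traded against the cylinders of the
   later cover [SS N] that they contain. *)
Lemma list_weight_outermost_first_in_le k N beta :
  (k <= N)%nat ->
  (forall N', cover_sum_filter s (extends_list (outermost_first_in k N)) (SS N) N' <= beta) ->
  list_weight s (outermost_first_in k N) <= bb k - nu k + beta.
Proof.
  intros HkN Hbeta. set (Lk := outermost_first_in k N).
  apply (list_weight_le_local_cover s m (Ak k) (SS k)
           (fun i => if extends_list Lk (SS N i) then SS N i else None)); auto.
  - unfold Lk, outermost_first_in. apply NoDup_filter, NoDup_cover_list, outermost_cover_inj.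
  - intros t Ht. destruct (in_outermost_first_in k N t Ht) as [Hmax [<- _]].
    exists (first_index t). apply first_occurrence, Hmax.
  - intros i sg E. destruct (extends_list Lk (SS N i)); [|discriminate].
    exact (proj1 (HSS N) i sg E).
  - intros x Hx [t [Ht Hcx]].
    assert (HxN : Ak N x) by (clear - Hmono Hx HkN; induction HkN; auto).
    destruct (proj2 (HSS N) x HxN) as [i [sg [E1 E2]]].
    exists i, sg. split; auto. rewrite E1. unfold extends_list.
    destruct (excluded_middle_informative _) as [|Hn]; auto. exfalso.
    destruct (in_outermost_first_in k N t Ht) as [[Hocc Hmax] _].
    destruct (Nat.le_gt_cases (length t) (length sg)) as [Hl|Hl].
    + apply Hn. exists t. split; auto. apply (prefix_of_cyl t sg x); auto.
    + assert (sg = t) by (apply Hmax; [exists N, i; auto | apply (prefix_of_cyl sg t x); auto; lia]).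
      subst. lia.
  - intros N'. rewrite cover_sum_restrict. apply Hbeta.
Qed.

Lemma cover_sum_outermost_cover_le N :
  cover_sum s outermost_cover N <= sum_f_R0 (fun k => bb k - nu k) N + bb N.
Proof.
  assert (Hpart : cover_sum s outermost_cover N =
                  sum_f_R0 (fun k => list_weight s (outermost_first_in k N)) N).
  { rewrite <- list_weight_cover_list. apply list_weight_partition.
    intros t Ht. destruct (in_outermost_first_in (first_cover t) N t) as [_ [_ H]]; [|lia].
    unfold outermost_first_in. apply filter_In. split; auto. apply Nat.eqb_refl. }
  assert (sum_f_R0 (fun k => list_weight s (outermost_first_in k N) - (bb k - nu k)) N <= bb N);
    [|rewrite minus_sum in H; lra].
  apply (sum_f_R0_sup_le N
           (fun k N' => cover_sum_filter s (extends_list (outermost_first_in k N)) (SS N) N')).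
  - intros k N1 N2 H. apply cover_sum_filter_mono; auto.
  - intros k Hk beta Hbeta. pose proof (list_weight_outermost_first_in_le k N beta Hk Hbeta). lra.
  - intros N'. eapply Rle_trans; [apply sum_cover_sum_filter_disjoint|apply Hbb].
    intros k k' [sg|] Hk Hk' E E'; [|discriminate]. unfold extends_list in E, E'.
    destruct (excluded_middle_informative _) as [[t [Ht Hpt]]|]; [|discriminate].
    destruct (excluded_middle_informative _) as [[t' [Ht' Hpt']]|]; [|discriminate].
    destruct (in_outermost_first_in k N t Ht) as [Hmt [Hkt _]].
    destruct (in_outermost_first_in k' N t' Ht') as [Hmt' [Hkt' _]].
    rewrite <- Hkt, <- Hkt'. f_equal. apply (outermost_prefix_unique t t' sg); auto.
Qed.

End OutermostCylinders.

(* Choose nearly optimal covers of the [Ak k], with errors summing to at most [eta/4]; their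
   outermost cylinders cover [A] with weight below [eps - eta/2]. *)
Lemma net_ge_increasing_union s m eps A (Ak : nat -> cantor -> Prop) :
  (forall k x, Ak k x -> Ak (S k) x) -> (forall x, A x -> exists k, Ak k x) ->
  net_ge s m eps A -> forall eta, 0 < eta -> exists k, net_ge s m (eps - eta) (Ak k).
Proof.
  intros Hmono HA HNet eta Heta. apply NNPP. intros Hno.
  set (eta' := eta / 4).
  assert (Hch : forall k, exists p : (nat -> option (list bool)) * R * R,
             cyl_cover m (Ak k) (fst (fst p)) /\
             (forall N, cover_sum s (fst (fst p)) N <= snd (fst p)) /\
             snd (fst p) < snd p + eta' * (/2)^(S k) /\ snd p < eps - eta /\
             (forall a, covered s m (Ak k) a -> snd p <= a)).
  { intros k. destruct (net_inf_approx s m (Ak k) (eps - eta)) as [nu [H1 [H2 H3]]].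
    { apply NNPP. intros Hn. apply Hno. exists k. intros a Ha.
      apply Rnot_lt_le. intros Hlt. apply Hn. eauto. }
    destruct (H3 (eta' * (/2)^(S k))) as [a [[cov [Hc Ha1]] Ha2]].
    { apply Rmult_lt_0_compat; [unfold eta'; lra | apply half_pow_pos]. }
    exists (cov, a, nu). simpl. auto. }
  apply choice in Hch as [p Hp].
  set (SS := fun k => fst (fst (p k))). set (bb := fun k => snd (fst (p k))).
  set (nu := fun k => snd (p k)).
  assert (Hbound : forall N, cover_sum s (outermost_cover SS) N <= eps - eta + 2 * eta').
  { intros N. eapply Rle_trans.
    { apply (cover_sum_outermost_cover_le s m Ak SS (fun k => proj1 (Hp k)) bb nu);
        [apply Hp | apply Hp | exact Hmono]. }
    assert (Hgap : sum_f_R0 (fun k => bb k - nu k) N <= eta').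
    { apply Rle_trans with (sum_f_R0 (fun k => (/2)^(S k) * eta') N).
      - apply sum_Rle. intros k _. destruct (Hp k) as [_ [_ [H _]]]. unfold bb, nu. lra.
      - rewrite <- scal_sum, sum_half_pow. pose proof (half_pow_pos (S N)). unfold eta'. nra. }
    destruct (Hp N) as [_ [_ [H1 [H2 _]]]].
    pose proof (half_pow_le 0 (S N) ltac:(lia)) as H0. rewrite pow_O in H0.
    assert (eta' * (/2)^(S N) <= eta') by (unfold eta' in *; nra).
    unfold bb, nu in *. lra. }
  assert (eps <= eps - eta + 2 * eta'); [|unfold eta' in *; lra].
  apply HNet. exists (outermost_cover SS). split; auto.
  apply (cyl_cover_outermost_cover m Ak SS (fun k => proj1 (Hp k)) A HA).
Qed.

Definition Sig11_under (Rel : list bool -> list nat -> Prop) (tau : list nat) (x : cantor) : Prop :=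
  exists g : baire, (forall i, (i < length tau)%nat -> (g i <= nth i tau 0)%nat) /\
    forall n, Rel (pre x n) (pre g n).

(* Losing [eps 2^-(n+2)] at step [n] keeps every level above [eps / 2]. *)
Definition eps_level (eps : R) (n : nat) : R := eps * (1 + (/2)^n) / 2.

Lemma net_ge_Sig11_under_snoc s m eps Rel tau : 0 < eps ->
  net_ge s m (eps_level eps (length tau)) (Sig11_under Rel tau) ->
  exists j, net_ge s m (eps_level eps (S (length tau))) (Sig11_under Rel (tau ++ [j])).
Proof.
  intros He H.
  assert (Hnth : forall j i, (i < length tau)%nat -> nth i (tau ++ [j]) 0%nat = nth i tau 0%nat)
    by (intros; apply app_nth1; auto).
  assert (Hlast : forall j, nth (length tau) (tau ++ [j]) 0%nat = j)
    by (intros; rewrite app_nth2, Nat.sub_diag by lia; reflexivity).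
  destruct (net_ge_increasing_union s m (eps_level eps (length tau)) (Sig11_under Rel tau)
             (fun j => Sig11_under Rel (tau ++ [j])))
    with (eta := eps * (/2)^(S (length tau)) / 2) as [j Hj]; [| |exact H| |].
  - intros k x [g [Hg1 Hg2]]. exists g. split; auto. intros i Hi.
    rewrite length_app in *. simpl in *. specialize (Hg1 i ltac:(lia)).
    destruct (Nat.eq_dec i (length tau)) as [->|]; [rewrite Hlast in *; lia|].
    rewrite Hnth in * by lia. exact Hg1.
  - intros x [g [Hg1 Hg2]]. exists (g (length tau)), g. split; auto. intros i Hi.
    rewrite length_app in Hi. simpl in Hi.
    destruct (Nat.eq_dec i (length tau)) as [->|]; [rewrite Hlast; lia|].
    rewrite Hnth by lia. apply Hg1. lia.
  - pose proof (half_pow_pos (S (length tau))). apply Rmult_lt_0_compat; [|lra]. nra.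
  - exists j. eapply net_ge_le; [exact Hj|]. unfold eps_level. simpl. lra.
Qed.

Definition next_bound s m eps Rel (tau : list nat) : nat :=
  match excluded_middle_informative
          (exists j, net_ge s m (eps_level eps (S (length tau))) (Sig11_under Rel (tau ++ [j]))) with
  | left H => proj1_sig (constructive_indefinite_description _ H)
  | right _ => 0%nat
  end.

Fixpoint bound_prefix s m eps Rel (n : nat) : list nat :=
  match n with
  | O => []
  | S n => bound_prefix s m eps Rel n ++ [next_bound s m eps Rel (bound_prefix s m eps Rel n)]
  end.

Lemma length_bound_prefix s m eps Rel n : length (bound_prefix s m eps Rel n) = n.
Proof. induction n; simpl; auto. rewrite length_app, IHn. simpl. lia. Qed.

Lemma firstn_bound_prefix s m eps Rel k k' :
  (k <= k')%nat -> firstn k (bound_prefix s m eps Rel k') = bound_prefix s m eps Rel k.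
Proof.
  induction 1 as [|k' Hk IH].
  - rewrite <- (length_bound_prefix s m eps Rel k) at 1. apply firstn_all.
  - simpl. rewrite firstn_app, IH, length_bound_prefix.
    replace (k - k')%nat with 0%nat by lia. apply app_nil_r.
Qed.

Lemma net_ge_bound_prefix s m eps Rel n : 0 < eps -> net_ge s m eps (Sig11_under Rel []) ->
  net_ge s m (eps_level eps n) (Sig11_under Rel (bound_prefix s m eps Rel n)).
Proof.
  intros He H0. induction n as [|n IH].
  - eapply net_ge_le; [exact H0|]. unfold eps_level. simpl. lra.
  - simpl. unfold next_bound. destruct (excluded_middle_informative _) as [Hj|Hn].
    + destruct (constructive_indefinite_description _ Hj) as [j Hj']. simpl.
      rewrite length_bound_prefix in Hj'. exact Hj'.
    + exfalso. apply Hn, net_ge_Sig11_under_snoc; auto. rewrite length_bound_prefix. auto.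
Qed.

(* Compactness of the [r]-bounded witnesses. *)
Lemma Sig11_under_pre_trapped Rel (r : baire) (O : cantor -> Prop) :
  (forall x, O x -> exists n, forall y, pre y n = pre x n -> O y) ->
  (forall x, Cf Rel r x -> O x) -> exists n, forall x, Sig11_under Rel (pre r n) x -> O x.
Proof.
  intros HO HC. apply NNPP. intros Hn.
  assert (Hx : forall n, exists p : cantor * baire,
             (forall i, (i < n)%nat -> (snd p i <= r i)%nat) /\
             (forall k, Rel (pre (fst p) k) (pre (snd p) k)) /\ ~ O (fst p)).
  { intros n. apply NNPP. intros Hn'. apply Hn. exists n. intros x [g [Hg1 Hg2]].
    apply NNPP. intros HOx. apply Hn'. exists (x, g). simpl. repeat split; auto.
    intros i Hi. specialize (Hg1 i). rewrite length_pre, nth_pre in Hg1 by auto. auto. }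
  apply choice in Hx as [p Hp].
  destruct (bounded_witness_limit Rel r (fun n => fst (p n)) (fun n => snd (p n)))
    as [x [g [Hg1 [Hg2 Hg3]]]].
  - intros n i Hi. apply (proj1 (Hp n)). auto.
  - intros n k _. apply (proj1 (proj2 (Hp n))).
  - destruct (HO x (HC x (ex_intro _ g (conj Hg1 Hg2)))) as [n Hn'].
    destruct (Hg3 n 0%nat) as [j [_ Hj]].
    apply (proj2 (proj2 (Hp j))). apply Hn', Hj.
Qed.

Lemma net_ge_Cf s m e Rel (r : baire) :
  (forall n, net_ge s m e (Sig11_under Rel (pre r n))) -> net_ge s m e (Cf Rel r).
Proof.
  intros H a [cov [[Hlen Hcov] Ha]].
  destruct (Sig11_under_pre_trapped Rel r (fun x => exists i sg, cov i = Some sg /\ cyl sg x))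
    as [n Hn]; auto.
  - intros x [i [sg [E Hx]]]. exists (length sg). intros y Hy.
    exists i, sg. split; auto. unfold cyl in *. congruence.
  - apply (H n). exists cov. split; auto. split; auto.
Qed.

Theorem mainTheorem3 (s : R) (Rel : list bool -> list nat -> Prop) :
  0 < s ->
  recursive_pred Rel ->
  Hs_pos s (Sig11 Rel) ->
  exists r : baire, forall f : baire,
    (forall n, (r n <= f n)%nat) ->
    Pi01 f (Cf Rel f) /\
    (forall x, Cf Rel f x -> Sig11 Rel x) /\
    Hs_pos s (Cf Rel f).
Proof.
  intros Hs HR [delta [eps [Hd [He HH]]]].
  destruct (least_half_pow_le delta Hd) as [m [Hm _]].
  assert (HE : net_ge s m eps (Sig11_under Rel [])).
  { apply (net_ge_subset s m eps (Sig11 Rel)); [apply (net_ge_of_Hs_delta_ge s delta); auto|].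
    intros x [g Hg]. exists g. split; auto. simpl. lia. }
  set (r := fun i => nth i (bound_prefix s m eps Rel (S i)) 0%nat).
  assert (Hr : net_ge s m (eps / 2) (Cf Rel r)).
  { apply net_ge_Cf. intros n. unfold r.
    rewrite (pre_diagonal _ (length_bound_prefix s m eps Rel) (firstn_bound_prefix s m eps Rel)).
    eapply net_ge_le; [apply net_ge_bound_prefix; auto|].
    unfold eps_level. pose proof (half_pow_pos n). nra. }
  exists r. intros f Hf. split; [|split].
  - apply Pi01_Cf, HR.
  - intros x [g [_ Hg]]. exists g. exact Hg.
  - exists ((/2)^m), (eps / 2). split; [apply half_pow_pos|]. split; [lra|].
    apply Hs_delta_ge_of_net_ge; auto. apply (net_ge_subset s m (eps / 2) (Cf Rel r)); auto.
    intros x [g [Hg1 Hg2]]. exists g. split; auto. intros n. specialize (Hg1 n). specialize (Hf n). lia.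
Qed.
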